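(* Let $k$ be a field, $\Gamma=(V,E)$ a finite connected quiver, $I\subseteq R^2$ a two-sided ideal of $k\Gamma$, and $\mathscr{Q}$ a fixed basis of $k\Gamma/I$ as described in the context. For a $k$-linear map $D$ into $k\Gamma/I$ defined (at least) on $kV\oplus kE$, and a path $p$ in its domain, write $D(p)=\sum_{\overline{q}\in\mathscr{Q}}c^p_{\overline{q}}\overline{q}$ with $c^p_{\overline{q}}\in k$. Consider the conditions: (a) for every $v\in V$, $D(v)=\sum_{\overline{q}\in\mathscr{Q},\,t(\overline{q})=v,\,h(\overline{q})\neq v}c^v_{\overline{q}}\overline{q}+\sum_{\overline{q}\in\mathscr{Q},\,h(\overline{q})=v,\,t(\overline{q})\neq v}c^v_{\overline{q}}\overline{q}$; (b) for every $p\in E$, $D(p)=\sum_{\overline{q}\in\mathscr{Q},\,h(\overline{q})=t(p),\,t(\overline{q})\neq t(p)}c^{t(p)}_{\overline{q}}\,\overline{q}\,\overline{p}+\sum_{\overline{q}\in\mathscr{Q},\,\overline{q}\parallel p}c^p_{\overline{q}}\overline{q}+\sum_{\overline{q}\in\mathscr{Q},\,t(\overline{q})=h(p),\,h(\overline{q})\neq h(p)}c^{h(p)}_{\overline{q}}\,\overline{p}\,\overline{q}$; (c) for every $\overline{q}\in\mathscr{Q}$ with $t(\overline{q})\neq h(\overline{q})$, $c^{h(\overline{q})}_{\overline{q}}+c^{t(\overline{q})}_{\overline{q}}=0$. (i) If $D:k\Gamma\to k\Gamma/I$ is a differential operator, then (a), (b), (c) hold. (ii) Conversely, if a $k$-linear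 map $D:kV\oplus kE\to k\Gamma/I$ satisfies (a), (b), (c), then $D$ extends uniquely to a differential operator $k\Gamma\to k\Gamma/I$, given on a path $p=p_1\cdots p_l$ ($p_i\in E$, $l\ge 2$) by $D(p)=\sum_{i=1}^l\overline{p_1}\cdots\overline{p_{i-1}}D(p_i)\overline{p_{i+1}}\cdots\overline{p_l}$.
   Context: For a path $p$, $t(p)$ and $h(p)$ denote its starting and ending vertex; vertices are trivial paths with $t(v)=h(v)=v$; paths are multiplied by left-to-right concatenation ($pq=0$ if $h(p)\neq t(q)$), so $t(p)p=p=ph(p)$. $R$ is the ideal of $k\Gamma$ generated by $E$; $\overline{x}=x+I$; $kV$, $kE$ are the spans of $V$, $E$. A differential operator from $k\Gamma$ to $k\Gamma/I$ is a $k$-linear map with $D(xy)=D(x)\overline{y}+\overline{x}D(y)$. $\mathscr{Q}$ is a fixed $k$-basis of $k\Gamma/I$ consisting of residue classes of paths and containing $\overline{v}$ for all $v\in V$ and $\overline{e}$ for all $e\in E$ (such a basis exists). If two paths not in $I$ have the same residue class they are parallel (same start and end vertex), so for $\overline{q}\in\mathscr{Q}$ one defines $t(\overline{q})$, $h(\overline{q})$ as the start and end vertex of any representing path; for a path $s$, $s\parallel\overline{q}$ means $t(s)=t(\overline{q})$ and $h(s)=h(\overline{q})$. *)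

From HB Require Import structures.
From mathcomp Require Import all_boot all_order all_algebra.
From mathcomp Require Import finmap.
From mathcomp.multinomials Require Import monalg.

Set Implicit Arguments.
Unset Strict Implicit.
Unset Printing Implicit Defensive.

Import GRing.Theory.
Local Open Scope ring_scope.

Section PathAlgebra.

Variables (V E : finType) (t h : E -> V).

Definition quiver_connected : Prop :=
  forall u v : V,
    connect (fun a b => [exists e, ((t e == a) && (h e == b))
                                    || ((t e == b) && (h e == a))]) u v.

(* A raw path is a starting vertex together with a list of arrows; it is a
   path when the arrows are composable (left-to-right) and the first arrow
   starts at the given vertex.  The empty list gives the trivial path at v. *)
Definition validp (p : V * seq E) : bool :=
  if p.2 is e :: s then (t e == p.1) && path (fun e1 e2 => h e1 == t e2) e s
  else true.

Definition qpath := {p : V * seq E | validp p}.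

Definition arrows (p : qpath) : seq E := (val p).2.
Definition ptl (p : qpath) : V := (val p).1.
Definition phd (p : qpath) : V := last (val p).1 [seq h e | e <- arrows p].

Definition triv (v : V) : qpath := exist _ (v, [::]) (erefl true).

Lemma arrow_validp (e : E) : validp (t e, [:: e]).
Proof. by rewrite /validp /= eqxx. Qed.

Definition apath (e : E) : qpath := exist _ (t e, [:: e]) (arrow_validp e).

Section Algebra.
Variable k : fieldType.

Definition kG := {malg k[qpath]}.

Definition pcat (p q : qpath) : kG :=
  if phd p == ptl q then
    (if insub (ptl p, arrows p ++ arrows q) is Some r then << r >> else 0)
  else 0.

Definition pmul (x y : kG) : kG :=
  \sum_(p <- msupp x) \sum_(q <- msupp y) (x@_p * y@_q) *: pcat p q.

Definition vtx (v : V) : kG := << triv v >>.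
Definition arr (e : E) : kG := << apath e >>.

Definition in_kVE (x : kG) : Prop :=
  forall p, p \in msupp x -> (size (arrows p) <= 1)%N.

(* R^2 : elements supported on paths of length >= 2
   (R = ideal generated by the arrows = span of paths of length >= 1). *)
Definition in_R2 (x : kG) : Prop :=
  forall p, p \in msupp x -> (2 <= size (arrows p))%N.

Definition two_sided_ideal (I : kG -> Prop) : Prop :=
  [/\ I 0,
      (forall x y, I x -> I y -> I (x + y)),
      (forall (a : k) x, I x -> I (a *: x)),
      (forall x y, I x -> I (pmul y x)) &
      (forall x y, I x -> I (pmul x y))].

(* (A, pi, mulA) is the quotient algebra k Gamma / I : pi is a k-linear
   surjection with kernel exactly I, and mulA is the induced multiplication,
   i.e. (x + I)(y + I) = xy + I. *)
Definition is_quotient (I : kG -> Prop) (A : lmodType k) (pi : kG -> A)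
    (mulA : A -> A -> A) : Prop :=
  [/\ (forall (a : k) x y, pi (a *: x + y) = a *: pi x + pi y),
      (forall z : A, exists x, pi x = z),
      (forall x, pi x = 0 <-> I x) &
      (forall x y, pi (pmul x y) = mulA (pi x) (pi y))].

Section Quotient.
Variables (A : lmodType k) (pi : kG -> A) (mulA : A -> A -> A).

Definition res (p : qpath) : A := pi << p >>.

(* [Qsum Q z f] : z equals the (finitely supported) sum of f over Q. *)
Definition Qsum (Q : qpath -> Prop) (z : A) (f : qpath -> A) : Prop :=
  exists s : seq qpath,
    [/\ uniq s, (forall q, q \in s -> Q q),
        (forall q, Q q -> q \notin s -> f q = 0) &
        z = \sum_(q <- s) f q].

(* The residues of the paths in Q (a set of representative paths) form a
   basis of A, and crd z q is the coefficient of (res q) in z. *)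
Definition is_path_basis (Q : qpath -> Prop) (crd : A -> qpath -> k) : Prop :=
  (forall (s : seq qpath) (c : qpath -> k),
      uniq s -> (forall q, q \in s -> Q q) ->
      \sum_(q <- s) c q *: res q = 0 -> forall q, q \in s -> c q = 0)
  /\ (forall z : A, Qsum Q z (fun q => crd z q *: res q)).

Definition is_linear (D : kG -> A) : Prop :=
  forall (a : k) x y, D (a *: x + y) = a *: D x + D y.

Definition linear_on_kVE (D : kG -> A) : Prop :=
  forall (a : k) x y, in_kVE x -> in_kVE y -> D (a *: x + y) = a *: D x + D y.

Definition diff_op (D : kG -> A) : Prop :=
  is_linear D /\
  forall x y, D (pmul x y) = mulA (D x) (pi y) + mulA (pi x) (D y).

Variables (Q : qpath -> Prop) (crd : A -> qpath -> k).

Definition cf (D : kG -> A) (x : kG) (q : qpath) : k := crd (D x) q.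

Definition cond_a (D : kG -> A) : Prop :=
  forall v : V,
    Qsum Q (D (vtx v)) (fun q =>
      (if (ptl q == v) && (phd q != v) then cf D (vtx v) q *: res q else 0)
      + (if (phd q == v) && (ptl q != v) then cf D (vtx v) q *: res q else 0)).

Definition cond_b (D : kG -> A) : Prop :=
  forall p : E,
    Qsum Q (D (arr p)) (fun q =>
      (if (phd q == t p) && (ptl q != t p) then
         cf D (vtx (t p)) q *: mulA (res q) (res (apath p)) else 0)
      + (if (ptl q == t p) && (phd q == h p) then cf D (arr p) q *: res q
         else 0)
      + (if (ptl q == h p) && (phd q != h p) then
         cf D (vtx (h p)) q *: mulA (res (apath p)) (res q) else 0)).

Definition cond_c (D : kG -> A) : Prop :=
  forall q, Q q -> ptl q != phd q ->
    cf D (vtx (phd q)) q + cf D (vtx (ptl q)) q = 0.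

Definition lmulA (s : seq E) (z : A) : A :=
  foldr (fun e acc => mulA (res (apath e)) acc) z s.
Definition rmulA (z : A) (s : seq E) : A :=
  foldl (fun acc e => mulA acc (res (apath e))) z s.

Definition leibniz_formula (D : kG -> A) (p : qpath) : A :=
  let s := arrows p in
  \sum_(i < size s)
     lmulA (take i s) (rmulA (D (arr (tnth (in_tuple s) i))) (drop i.+1 s)).

End Quotient.
End Algebra.
End PathAlgebra.

(* A differential operator is determined by the product rule on pairs of basis paths:
   for a path p = p_1 ... p_l the rule forces the Leibniz expansion of D(p), so D is
   determined by its values on vertices and arrows, and conversely the Leibniz expansion
   defines a differential operator as soon as the product rule holds for the products of
   vertices and arrows that stay in kV + kE (vertex-vertex, vertex-arrow, arrow-head).
   Expanding D(v) and D(a) in the basis and multiplying by the vertex idempotents turns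
   these finitely many identities into the coefficient conditions (a), (b), (c): for
   instance D(v) = D(v) v + v D(v) kills the coefficients of the basis paths with both or
   no endpoint at v, and D(u) v + u D(v) = 0 for u <> v is exactly (c). *)

From mathcomp Require Import all_boot all_order all_algebra.
From mathcomp Require Import finmap.
From mathcomp.multinomials Require Import monalg.

Set Implicit Arguments.
Unset Strict Implicit.
Unset Printing Implicit Defensive.

Import GRing.Theory.
Local Open Scope ring_scope.

Section LinearMaps.
Variables (R : pzRingType) (M N : lmodType R) (f : M -> N).
Hypothesis f_linear : linear f.

Lemma lin0 : f 0 = 0.
Proof.
have := f_linear 1 0 0; rewrite !scale1r addr0 => f00.
by apply: (addrI (f 0)); rewrite addr0 -f00.
Qed.

Lemma linD : {morph f : x y / x + y}.
Proof. by move=> x y; rewrite -[x in LHS]scale1r f_linear scale1r. Qed.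

Lemma linZ : scalable f.
Proof. by move=> a x; rewrite -[a *: x]addr0 f_linear lin0 addr0. Qed.

Lemma lin_sum (I : Type) (r : seq I) (F : I -> M) :
  f (\sum_(i <- r) F i) = \sum_(i <- r) f (F i).
Proof. exact: (big_morph f linD lin0). Qed.

End LinearMaps.

Lemma linear_add (R : pzRingType) (M N : lmodType R) (f g : M -> N) :
  linear f -> linear g -> linear (fun x => f x + g x).
Proof. by move=> Lf Lg a x y; rewrite Lf Lg scalerDr addrACA. Qed.

Lemma linear_comp (R : pzRingType) (M N P : lmodType R) (f : M -> N) (g : N -> P) :
  linear f -> linear g -> linear (g \o f).
Proof. by move=> Lf Lg a x y /=; rewrite Lf Lg. Qed.

Lemma big_uniq_widen (T : eqType) (M : nmodType) (f : T -> M) (s1 s : seq T) :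
  uniq s1 -> uniq s -> {subset s1 <= s} -> {in s, forall x, x \notin s1 -> f x = 0} ->
  \sum_(x <- s1) f x = \sum_(x <- s) f x.
Proof.
move=> u1 u s1s f0.
rewrite [RHS](bigID (mem s1)) /= [X in _ + X]big1_seq ?addr0; last first.
  by move=> x /andP[x_s1 xs]; apply: f0.
rewrite -[RHS]big_filter; apply: perm_big; apply: uniq_perm; rewrite ?filter_uniq //.
by move=> x; rewrite mem_filter; case: (boolP (x \in s1)) => // /s1s ->.
Qed.

Section LinearExtension.
Variables (R : comNzRingType) (K : choiceType) (M : lmodType R).
Implicit Types (F G : K -> M) (x : {malg R[K]}).

Definition linext F x : M := \sum_(p <- msupp x) x@_p *: F p.

Lemma linextEw F x (d : {fset K}) :
  (msupp x `<=` d)%fset -> linext F x = \sum_(p <- d) x@_p *: F p.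
Proof.
move=> le_xd; apply: big_fset_incl => // p _ /mcoeff_outdom ->.
by rewrite scale0r.
Qed.

Lemma linext_linear F : linear (linext F).
Proof.
move=> a x y; pose d := (msupp x `|` msupp y `|` msupp (a *: x + y))%fset.
rewrite (@linextEw _ _ d) ?fsubsetUr //.
rewrite (@linextEw _ x d); last by rewrite /d -fsetUA fsubsetUl.
rewrite (@linextEw _ y d); last by rewrite /d fsetUC fsetUA fsubsetUr.
rewrite scaler_sumr -big_split /=; apply: eq_bigr => p _.
by rewrite mcoeffD mcoeffZ scalerDl scalerA.
Qed.

Lemma linextU F p : linext F << p >> = F p.
Proof. by rewrite /linext msuppU oner_eq0 big_seq_fset1 mcoeffUU scale1r. Qed.

Lemma eq_linext F G : F =1 G -> linext F =1 linext G.
Proof. by move=> eFG x; apply: eq_bigr => p _; rewrite eFG. Qed.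

Lemma linext_scale_add a F G x :
  linext (fun p => a *: F p + G p) x = a *: linext F x + linext G x.
Proof.
rewrite /linext scaler_sumr -big_split; apply: eq_bigr => p _.
by rewrite scalerDr !scalerA mulrC.
Qed.

Lemma linextE (L : {malg R[K]} -> M) x : linear L -> L x = linext (fun p => L << p >>) x.
Proof.
move=> Llin; rewrite {1}(monalgE x) lin_sum //; apply: eq_bigr => p _.
suff -> : << x@_p *g p >> = x@_p *: (<< p >> : {malg R[K]}) by rewrite linZ.
by apply/malgP => q; rewrite mcoeffZ !mcoeffU mulr_natr.
Qed.

Lemma linear_malg_eq (L L' : {malg R[K]} -> M) :
  linear L -> linear L' -> (forall p, L << p >> = L' << p >>) -> L =1 L'.
Proof.
by move=> Llin L'lin eqL x; rewrite (linextE x Llin) (linextE x L'lin); exact: eq_linext.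
Qed.

Lemma bilinear_malg_eq (B B' : {malg R[K]} -> {malg R[K]} -> M) :
  (forall y, linear (B^~ y)) -> (forall x, linear (B x)) ->
  (forall y, linear (B'^~ y)) -> (forall x, linear (B' x)) ->
  (forall p q, B << p >> << q >> = B' << p >> << q >>) -> forall x y, B x y = B' x y.
Proof.
move=> Bl Br B'l B'r eqB x y; apply: (linear_malg_eq (Bl y) (B'l y)) => p.
exact: linear_malg_eq.
Qed.

End LinearExtension.

Section Paths.
Variables (V E : finType) (t h : E -> V).
Local Notation qpath := (qpath t h).
Local Notation triv := (triv t h).
Local Notation apath := (apath t h).
Implicit Types p q r : qpath.

(* Junk value: when [p] and [q] are not composable, [catp p q] is [p]. *)
Definition catp p q : qpath := odflt p (insub (ptl p, arrows p ++ arrows q)).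

Lemma qpath_ext p q : ptl p = ptl q -> arrows p = arrows q -> p = q.
Proof.
case: p q => [[v a] ?] [[w b] ?]; rewrite /ptl /arrows /= => vw ab.
by apply: val_inj; rewrite /= vw ab.
Qed.

Lemma validp_cat p q : phd p = ptl q -> validp t h (ptl p, arrows p ++ arrows q).
Proof.
case: p q => [[v [|a s]] /= vp] [[w r] /= vq]; rewrite /phd /ptl /arrows //= => hpq.
  by rewrite hpq.
case/andP: vp => ta pa; rewrite /validp /= ta cat_path pa /=.
move: vq hpq; case: r => [|b r] //= /andP[tb ->]; rewrite andbT last_map => ->.
by rewrite (eqP tb).
Qed.

Section Composable.
Variables p q : qpath.
Hypothesis hpq : phd p = ptl q.

Lemma catp_val : val (catp p q) = (ptl p, arrows p ++ arrows q).
Proof. by rewrite /catp (insubT _ (validp_cat hpq)). Qed.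

Lemma ptl_catp : ptl (catp p q) = ptl p.
Proof. by rewrite /ptl catp_val. Qed.

Lemma arrows_catp : arrows (catp p q) = arrows p ++ arrows q.
Proof. by rewrite /arrows catp_val. Qed.

Lemma phd_catp : phd (catp p q) = phd q.
Proof. by rewrite [LHS]/phd catp_val /= arrows_catp map_cat last_cat -/(phd p) hpq. Qed.

End Composable.

Lemma catpA p q r : phd p = ptl q -> phd q = ptl r -> catp (catp p q) r = catp p (catp q r).
Proof.
move=> hpq hqr; have hpq_r : phd (catp p q) = ptl r by rewrite phd_catp.
have hp_qr : phd p = ptl (catp q r) by rewrite ptl_catp.
by apply: qpath_ext; rewrite ?ptl_catp // !arrows_catp // catA.
Qed.

Lemma triv_catp v q : ptl q = v -> catp (triv v) q = q.
Proof. by move=> tq; apply: qpath_ext; rewrite ?ptl_catp ?arrows_catp. Qed.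

Lemma catp_triv v q : phd q = v -> catp q (triv v) = q.
Proof. by move=> hq; apply: qpath_ext; rewrite ?ptl_catp ?arrows_catp ?cats0. Qed.

Lemma ptl_triv v : ptl (triv v) = v. Proof. by []. Qed.
Lemma ptl_apath e : ptl (apath e) = t e. Proof. by []. Qed.
Lemma phd_apath e : phd (apath e) = h e. Proof. by []. Qed.

Lemma qpath_nil p : arrows p = [::] -> p = triv (ptl p).
Proof. by move=> ap; apply: qpath_ext. Qed.

Lemma qpath_cons p e s : arrows p = e :: s ->
  exists p', [/\ ptl p' = h e, arrows p' = s & p = catp (apath e) p'].
Proof.
case: p => [[v a] vp]; rewrite /arrows /= => ap; subst a.
have /andP[/eqP /= te pa] := vp.
have vs : validp t h (h e, s).
  by clear -pa; case: s pa => [|b r] //= /andP[/eqP -> pr]; rewrite /validp /= eqxx.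
exists (exist _ (h e, s) vs); split => //.
by apply: qpath_ext; rewrite ?ptl_catp ?arrows_catp.
Qed.

Lemma qpath_arrow p e : arrows p = [:: e] -> p = apath e.
Proof.
move=> ap; have [p' [tp' ap' ->]] := qpath_cons ap.
by rewrite (qpath_nil ap') tp' catp_triv.
Qed.

Lemma qpath_ind (P : qpath -> Prop) :
  (forall v, P (triv v)) ->
  (forall e p, ptl p = h e -> P p -> P (catp (apath e) p)) ->
  forall p, P p.
Proof.
move=> Ptriv Pcons p; move: {2}(size _) (erefl (size (arrows p))) => n.
elim: n p => [|n IHn] p; first by move/eqP; rewrite size_eq0 => /eqP/qpath_nil ->.
case ap: (arrows p) => [|e s] //= [sz].
have [p' [tp' ap' ->]] := qpath_cons ap.
by apply: Pcons => //; apply: IHn; rewrite ap'.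
Qed.

End Paths.

Section PathAlgebra.
Variables (V E : finType) (t h : E -> V) (k : fieldType).
Local Notation qpath := (qpath t h).
Local Notation kG := (kG t h k).
Implicit Types (p q r : qpath) (x y z : kG).

Lemma pcatE p q : pcat k p q = if phd p == ptl q then << catp p q >> else 0.
Proof. by rewrite /pcat /catp; case: eqP => // hpq; rewrite (insubT _ (validp_cat hpq)). Qed.

Lemma pmulE x y : pmul x y = linext (fun p => linext (pcat k p) y) x.
Proof.
rewrite /pmul /linext; apply: eq_bigr => p _; rewrite scaler_sumr.
by apply: eq_bigr => q _; rewrite scalerA.
Qed.

Lemma pmulUU p q : pmul << p >> << q >> = pcat k p q.
Proof. by rewrite pmulE !linextU. Qed.

Lemma pmul_linearl y : linear (fun x : kG => pmul x y).
Proof. by move=> a x x'; rewrite !pmulE linext_linear. Qed.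

Lemma pmul_linearr x : linear (pmul x).
Proof.
move=> a y y'; rewrite !pmulE.
transitivity (linext (fun p => a *: linext (pcat k p) y + linext (pcat k p) y') x).
  by apply: eq_linext => p; apply: linext_linear.
exact: linext_scale_add.
Qed.

Lemma pmulA x y z : pmul (pmul x y) z = pmul x (pmul y z).
Proof.
have pmul0 y' : pmul 0 y' = 0 by rewrite pmulE /linext msupp0 big_nil.
have pmul0r x' : pmul x' 0 = 0 by exact: lin0 (pmul_linearr x').
move: x y; apply: bilinear_malg_eq => [y|x|y|x|p q].
- exact: linear_comp (pmul_linearl y) (pmul_linearl z).
- exact: linear_comp (pmul_linearr x) (pmul_linearl z).
- exact: pmul_linearl.
- exact: linear_comp (pmul_linearl z) (pmul_linearr x).
move: z; apply: linear_malg_eq => [||r]; first exact: pmul_linearr.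
  exact: linear_comp (pmul_linearr _) (pmul_linearr _).
rewrite [X in pmul X _ = _](pmulUU p q) [X in _ = pmul _ X](pmulUU q r) !pcatE.
case: (eqVneq (phd p) (ptl q)) => hpq; case: (eqVneq (phd q) (ptl r)) => hqr.
- rewrite [LHS]pmulUU [RHS]pmulUU !pcatE (phd_catp hpq) (ptl_catp hqr) hpq hqr !eqxx.
  by rewrite (catpA hpq hqr).
- by rewrite [LHS]pmulUU pcatE (phd_catp hpq) (negbTE hqr) pmul0r.
- by rewrite [RHS]pmulUU pcatE (ptl_catp hqr) (negbTE hpq) pmul0.
- by rewrite pmul0 pmul0r.
Qed.

End PathAlgebra.

Section KVE.
Variables (V E : finType) (t h : E -> V) (k : fieldType) (A : lmodType k).
Local Notation qpath := (qpath t h).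
Local Notation kG := (kG t h k).

Lemma in_kVEU (p : qpath) : (size (arrows p) <= 1)%N -> in_kVE (<< p >> : kG).
Proof. by move=> short_p q; rewrite msuppU oner_eq0 inE => /eqP ->. Qed.

Lemma linear_on_kVE_sum (D0 : kG -> A) (s : seq qpath) (c : qpath -> k) :
  linear_on_kVE D0 -> (forall p, p \in s -> size (arrows p) <= 1)%N ->
  in_kVE (\sum_(p <- s) c p *: << p >>) /\
  D0 (\sum_(p <- s) c p *: << p >>) = \sum_(p <- s) c p *: D0 << p >>.
Proof.
move=> D0lin; elim: s => [|p s IHs] short_s.
  have kVE0 : in_kVE (0 : kG) by move=> q; rewrite msupp0.
  split; rewrite !big_nil //; have := D0lin 1 0 0 kVE0 kVE0.
  by rewrite !scale1r addr0 => D00; apply: (addrI (D0 0)); rewrite addr0 -D00.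
have [kVEs D0s] := IHs (fun q qs => short_s q (mem_behead (s := p :: s) qs)).
have kVEp := in_kVEU (short_s p (mem_head p s)).
rewrite !big_cons D0lin ?D0s //; split => // q.
move/(fsubsetP (msuppD_le _ _)); rewrite in_fsetU => /orP[|/kVEs //].
by move/(fsubsetP (msuppZ_le _ _))/kVEp.
Qed.

Lemma linext_eq_on_kVE (D0 : kG -> A) (F : qpath -> A) :
  linear_on_kVE D0 -> (forall p, size (arrows p) <= 1 -> F p = D0 << p >>)%N ->
  forall x, in_kVE x -> linext F x = D0 x.
Proof.
move=> D0lin eqF x kVEx.
have xE : x = \sum_(p <- msupp x) x@_p *: << p >>.
  exact: (linextE x (L := id) (fun a u v => erefl)).
rewrite [in RHS]xE; have [_ ->] := linear_on_kVE_sum (fun p => x@_p) D0lin kVEx.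
by rewrite /linext big_seq [RHS]big_seq; apply: eq_bigr => p px; rewrite (eqF _ (kVEx p px)).
Qed.

End KVE.

Section PathSums.
Variables (V E : finType) (t h : E -> V) (k : fieldType) (A : lmodType k).
Variable Q : qpath t h -> Prop.
Implicit Types (z : A) (f g : qpath t h -> A).

Lemma Qsum_ext z f g : (forall q, Q q -> f q = g q) -> Qsum Q z f -> Qsum Q z g.
Proof.
move=> fg [s [us sQ f0 ->]]; exists s; split => //.
- by move=> q Qq qs; rewrite -fg // f0.
- by rewrite big_seq [RHS]big_seq; apply: eq_bigr => q /sQ /fg.
Qed.

Lemma Qsum0 : Qsum Q (0 : A) (fun=> 0).
Proof. by exists [::]; split => //; rewrite big_nil. Qed.

Lemma Qsum_linear (B : lmodType k) (L : A -> B) z f :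
  linear L -> Qsum Q z f -> Qsum Q (L z) (L \o f).
Proof.
move=> Llin [s [us sQ f0 ->]]; exists s; split => //.
- by move=> q Qq qs /=; rewrite f0 // lin0.
- exact: lin_sum.
Qed.

Lemma Qsum_common z1 z2 f1 f2 : Qsum Q z1 f1 -> Qsum Q z2 f2 ->
  exists s, [/\ uniq s, forall q, q \in s -> Q q,
    forall q, Q q -> q \notin s -> f1 q = 0 /\ f2 q = 0,
    z1 = \sum_(q <- s) f1 q & z2 = \sum_(q <- s) f2 q].
Proof.
move=> [s1 [u1 sQ1 f01 ->]] [s2 [u2 sQ2 f02 ->]].
have sQ q : q \in undup (s1 ++ s2) -> Q q.
  by rewrite mem_undup mem_cat => /orP[/sQ1|/sQ2].
exists (undup (s1 ++ s2)); split; rewrite ?undup_uniq //.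
- move=> q Qq; rewrite mem_undup mem_cat negb_or => /andP[q_s1 q_s2].
  by rewrite f01 ?f02.
- apply: big_uniq_widen; rewrite ?undup_uniq //.
    by move=> q; rewrite mem_undup mem_cat => ->.
  by move=> q /sQ Qq q_s1; rewrite f01.
apply: big_uniq_widen; rewrite ?undup_uniq //.
  by move=> q; rewrite mem_undup mem_cat => ->; rewrite orbT.
by move=> q /sQ Qq q_s2; rewrite f02.
Qed.

Lemma QsumD z1 z2 f1 f2 : Qsum Q z1 f1 -> Qsum Q z2 f2 ->
  Qsum Q (z1 + z2) (fun q => f1 q + f2 q).
Proof.
move=> S1 S2; have [s [us sQ f0 -> ->]] := Qsum_common S1 S2.
exists s; split; rewrite ?big_split //.
by move=> q Qq qs; have [-> ->] := f0 q Qq qs; rewrite addr0.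
Qed.

Lemma Qsum_inj z1 z2 f : Qsum Q z1 f -> Qsum Q z2 f -> z1 = z2.
Proof. by move=> S1 S2; have [s [_ _ _ -> ->]] := Qsum_common S1 S2. Qed.

End PathSums.

Arguments Qsum0 {V E t h k A Q}.

Section Derivations.
Variables (V E : finType) (t h : E -> V) (k : fieldType).
Local Notation qpath := (qpath t h).
Local Notation kG := (kG t h k).
Variables (I : kG -> Prop) (A : lmodType k) (pi : kG -> A) (mulA : A -> A -> A).
(* [r] stands for [res pi]. Keeping it abstract prevents unification from unfolding
   two distinct monomials [<< p >>], [<< q >>] (a costly finmap computation) whenever
   residues are compared during rewriting. *)
Variable r : qpath -> A.
Hypothesis pi_quot : is_quotient I pi mulA.
Hypothesis pi_res : forall p, pi << p >> = r p.
Local Notation "x ** y" := (mulA x y) (at level 40, left associativity).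

Lemma pi_linear : linear pi.
Proof. by case: pi_quot. Qed.

Lemma pi_surj u : exists x, pi x = u.
Proof. by case: pi_quot. Qed.

Lemma pi_mul x y : pi (pmul x y) = pi x ** pi y.
Proof. by case: pi_quot. Qed.

Lemma mulA_linearl u : linear (mulA^~ u).
Proof.
move=> a v w; have [x <-] := pi_surj v; have [y <-] := pi_surj w.
have [z <-] := pi_surj u.
by rewrite -pi_linear -!pi_mul (pmul_linearl z) pi_linear.
Qed.

Lemma mulA_linearr u : linear (mulA u).
Proof.
move=> a v w; have [x <-] := pi_surj v; have [y <-] := pi_surj w.
have [z <-] := pi_surj u.
by rewrite -pi_linear -!pi_mul (pmul_linearr z) pi_linear.
Qed.

Lemma mulA_assoc : associative mulA.
Proof.
move=> u v w; have [x <-] := pi_surj u; have [y <-] := pi_surj v.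
by have [z <-] := pi_surj w; rewrite -!pi_mul pmulA.
Qed.

Lemma res_mul p q : r p ** r q = if phd p == ptl q then r (catp p q) else 0.
Proof.
rewrite -!pi_res -pi_mul pmulUU pcatE.
by case: ifP => _; last exact: lin0 pi_linear.
Qed.

Lemma mul0A u : 0 ** u = 0. Proof. exact: lin0 (mulA_linearl u). Qed.
Lemma mulA0 u : u ** 0 = 0. Proof. exact: lin0 (mulA_linearr u). Qed.
Lemma mulDA u v w : (v + w) ** u = v ** u + w ** u. Proof. exact: (linD (mulA_linearl u) v w). Qed.
Lemma mulAD u v w : u ** (v + w) = u ** v + u ** w. Proof. exact: (linD (mulA_linearr u) v w). Qed.
Lemma mulZA u a v : (a *: v) ** u = a *: (v ** u). Proof. exact: (linZ (mulA_linearl u) a v). Qed.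
Lemma mulAZ u a v : u ** (a *: v) = a *: (u ** v). Proof. exact: (linZ (mulA_linearr u) a v). Qed.

Local Notation e_ v := (r (triv t h v)).
Local Notation ar a := (r (apath t h a)).
Local Notation vtx := (vtx t h k).
Local Notation arr := (arr t h k).

Lemma res_mul_triv q v : r q ** e_ v = if phd q == v then r q else 0.
Proof.
rewrite res_mul -[ptl (triv t h v)]/v.
by case: eqP => [hq|_]; first rewrite catp_triv.
Qed.

Lemma triv_mul_res q v : e_ v ** r q = if ptl q == v then r q else 0.
Proof.
rewrite res_mul -[phd (triv t h v)]/v eq_sym.
by case: eqP => [tq|_]; first rewrite triv_catp.
Qed.

Lemma res_mul_arr0 q a : phd q != t a -> r q ** ar a = 0.
Proof. by rewrite res_mul => /negbTE ->. Qed.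

Lemma arr_mul_res0 q a : ptl q != h a -> ar a ** r q = 0.
Proof. by rewrite res_mul eq_sym => /negbTE ->. Qed.

Lemma res_catp p q : phd p = ptl q -> r (catp p q) = r p ** r q.
Proof. by move=> hpq; rewrite res_mul hpq eqxx. Qed.

Lemma mulA_ifl (b : bool) u v : (if b then u else 0) ** v = if b then u ** v else 0.
Proof. by case: b; rewrite ?mul0A. Qed.

Lemma mulA_ifr (b : bool) u v : v ** (if b then u else 0) = if b then v ** u else 0.
Proof. by case: b; rewrite ?mulA0. Qed.

Lemma scaler_if (b : bool) (c : k) (u : A) : c *: (if b then u else 0) = if b then c *: u else 0.
Proof. by case: b; rewrite ?scaler0. Qed.

Lemma if_scaler (b : bool) (c : k) (u : A) : (if b then c else 0) *: u = if b then c *: u else 0.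
Proof. by case: b; rewrite ?scale0r. Qed.

Lemma triv_mul_res_arr q v a : e_ v ** (r q ** ar a) = if ptl q == v then r q ** ar a else 0.
Proof. by rewrite mulA_assoc triv_mul_res mulA_ifl. Qed.

Lemma triv_mul_arr_res q v a : e_ v ** (ar a ** r q) = if t a == v then ar a ** r q else 0.
Proof. by rewrite mulA_assoc triv_mul_res mulA_ifl. Qed.

Lemma res_arr_mul_triv q v a : (r q ** ar a) ** e_ v = if h a == v then r q ** ar a else 0.
Proof. by rewrite -mulA_assoc res_mul_triv mulA_ifr. Qed.

Lemma arr_res_mul_triv q v a : (ar a ** r q) ** e_ v = if phd q == v then ar a ** r q else 0.
Proof. by rewrite -mulA_assoc res_mul_triv mulA_ifr. Qed.

(* The product rule [D(xy) = D(x) y + x D(y)] for the products [xy] of vertices and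
   arrows that stay in [kV + kE], in terms of the values [dv], [da] of [D] on vertices
   and arrows; for an arrow followed by a vertex only the nonzero product is needed. *)
Definition kVE_leibniz (dv : V -> A) (da : E -> A) : Prop :=
  [/\ forall u v, dv u ** e_ v + e_ u ** dv v = (if u == v then dv u else 0),
      forall u a, dv u ** ar a + e_ u ** da a = (if t a == u then da a else 0) &
      forall a, da a ** e_ (h a) + ar a ** dv (h a) = da a].

Lemma diff_op_kVE_leibniz D : diff_op pi mulA D ->
  kVE_leibniz (fun v => D (vtx v)) (fun a => D (arr a)).
Proof.
move=> [Dlin DL]; have D0 : D 0 = 0 := lin0 Dlin.
split=> [u v|u a|a].
- rewrite -(pi_res (triv t h v)) -(pi_res (triv t h u)) -DL pmulUU pcatE.
  by case: (eqVneq u v) => [<-|_]; rewrite ?triv_catp.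
- rewrite -(pi_res (apath t h a)) -(pi_res (triv t h u)) -DL pmulUU pcatE.
  by case: (eqVneq (t a) u) => [<-|_]; rewrite ?triv_catp.
rewrite -(pi_res (triv t h (h a))) -(pi_res (apath t h a)) -DL pmulUU pcatE.
by rewrite eqxx catp_triv.
Qed.

Lemma diff_op_eq (D D' : kG -> A) : diff_op pi mulA D -> diff_op pi mulA D' ->
  (forall v, D (vtx v) = D' (vtx v)) -> (forall e, D (arr e) = D' (arr e)) -> D =1 D'.
Proof.
move=> [Dlin DL] [D'lin D'L] eqDv eqDa; apply: linear_malg_eq => //.
elim/qpath_ind => [v|e p tp eqDp]; first exact: eqDv.
have -> : << catp (apath t h e) p >> = pmul (arr e) << p >>.
  by rewrite /arr pmulUU pcatE phd_apath tp eqxx.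
by rewrite DL D'L; congr (_ ** _ + _ ** _); [exact: eqDa | exact: eqDp].
Qed.

Definition lmulr (s : seq E) (z : A) : A := foldr (fun e acc => ar e ** acc) z s.
Definition rmulr (z : A) (s : seq E) : A := foldl (fun acc e => acc ** ar e) z s.
Definition leibniz_sum (da : E -> A) (s : seq E) : A :=
  \sum_(i < size s) lmulr (take i s) (rmulr (da (tnth (in_tuple s) i)) (drop i.+1 s)).

Lemma eq_leibniz_sum (da da' : E -> A) s : da =1 da' -> leibniz_sum da s = leibniz_sum da' s.
Proof. by move=> eq_da; apply: eq_bigr => i _; rewrite eq_da. Qed.

Lemma leibniz_sum_cons da e s :
  leibniz_sum da (e :: s) = rmulr (da e) s + ar e ** leibniz_sum da s.
Proof.
rewrite /leibniz_sum big_ord_recl (tnth_nth e) /= drop0; congr (_ + _).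
rewrite (lin_sum (mulA_linearr (ar e))); apply: eq_bigr => i _.
by rewrite !(tnth_nth e).
Qed.

Lemma rmulr_arrows z p : arrows p != [::] -> rmulr z (arrows p) = z ** r p.
Proof.
elim/qpath_ind: p z => [//|e p tp IHp] z _.
have hep : phd (apath t h e) = ptl p by rewrite phd_apath tp.
rewrite (arrows_catp hep) (res_catp hep) /=.
case: (eqVneq (arrows p) [::]) => [/qpath_nil ->|/IHp ->]; last by rewrite mulA_assoc.
by rewrite tp (res_mul_triv (apath t h e)) phd_apath eqxx.
Qed.

Section Basis.
Variables (Q : qpath -> Prop) (crd : A -> qpath -> k).
Hypothesis Q_free : forall (s : seq qpath) (c : qpath -> k),
  uniq s -> (forall q, q \in s -> Q q) ->
  \sum_(q <- s) c q *: r q = 0 -> forall q, q \in s -> c q = 0.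
Hypothesis Qsum_crd : forall z, Qsum Q z (fun q => crd z q *: r q).

Lemma Qsum_coef_uniq z (c c' : qpath -> k) :
  Qsum Q z (fun q => c q *: r q) -> Qsum Q z (fun q => c' q *: r q) ->
  forall q, Q q -> c q = c' q.
Proof.
move=> S S' q Qq.
have [s [us sQ f0 zc zc']] := Qsum_common S S'.
case: (boolP (q \in s)) => qs.
  apply/eqP; rewrite -subr_eq0; apply/eqP; apply: (@Q_free s (fun q => c q - c' q) us sQ _ q qs).
  by under eq_bigr do rewrite scalerBl; rewrite sumrB -zc -zc' subrr.
have coef0 c0 : c0 *: r q = 0 -> c0 = 0.
  move=> c0q; apply: (@Q_free [:: q] (fun=> c0)); rewrite ?big_seq1 ?mem_seq1 //.
  by move=> q'; rewrite mem_seq1 => /eqP ->.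
by have [/coef0 -> /coef0 ->] := f0 q Qq qs.
Qed.

Section Summands.
Variables (dv : V -> A) (da : E -> A).

Definition cond_a_summand v q : A :=
  (if (ptl q == v) && (phd q != v) then crd (dv v) q *: r q else 0)
  + (if (phd q == v) && (ptl q != v) then crd (dv v) q *: r q else 0).

Definition cond_b_summand a q : A :=
  (if (phd q == t a) && (ptl q != t a) then crd (dv (t a)) q *: (r q ** ar a) else 0)
  + (if (ptl q == t a) && (phd q == h a) then crd (da a) q *: r q else 0)
  + (if (ptl q == h a) && (phd q != h a) then crd (dv (h a)) q *: (ar a ** r q) else 0).

Ltac expand := rewrite /cond_a_summand /cond_b_summand
  ?(mulDA, mulAD, mulA_ifl, mulA_ifr, mulZA, mulAZ, triv_mul_res_arr, triv_mul_arr_res,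
    res_arr_mul_triv, arr_res_mul_triv, res_mul_triv, triv_mul_res, phd_apath, ptl_apath,
    scaler_if).

Ltac vertex_cases x y := let E := fresh "E" in
  case: (eqVneq x y) => E; [rewrite ?E | rewrite ?(negbTE E)].
Ltac vertex_cases_ra x y := let E := fresh "E" in
  case: (eqVneq x y) => E; [rewrite ?E | rewrite ?(negbTE E) ?(res_mul_arr0 E)].
Ltac vertex_cases_ar x y := let E := fresh "E" in
  case: (eqVneq x y) => E; [rewrite ?E | rewrite ?(negbTE E) ?(arr_mul_res0 E)].

Ltac simplify := rewrite /= ?eqxx /= ?(if_same, addr0, add0r, scaler0, scale0r).

Lemma bracket_basis (c : k) v q : (c *: r q) ** e_ v + e_ v ** (c *: r q) =
  ((if phd q == v then c else 0) + (if ptl q == v then c else 0)) *: r q.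
Proof.
expand; rewrite scalerDl !if_scaler.
by vertex_cases (phd q) v; vertex_cases (ptl q) v; simplify; rewrite ?scalerDl.
Qed.

Lemma bracket_cond_a_summand u q :
  cond_a_summand u q ** e_ u + e_ u ** cond_a_summand u q = cond_a_summand u q.
Proof. by expand; vertex_cases (ptl q) u; vertex_cases (phd q) u; simplify. Qed.

Lemma bracket_cond_a_summand_neq u v q : u != v ->
  cond_a_summand u q ** e_ v + e_ u ** cond_a_summand v q =
  (if (ptl q == u) && (phd q == v) then crd (dv u) q + crd (dv v) q else 0) *: r q.
Proof.
move=> uv; have vu : v != u by rewrite eq_sym.
expand; rewrite if_scaler.
by vertex_cases (ptl q) u; vertex_cases (phd q) v; vertex_cases (ptl q) v; vertex_cases (phd q) u;
  rewrite ?(negbTE uv) ?(negbTE vu); simplify; rewrite ?scalerDl.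
Qed.

Lemma leibniz_tail_cond_b_summand a q :
  cond_a_summand (t a) q ** ar a + e_ (t a) ** cond_b_summand a q = cond_b_summand a q.
Proof.
expand.
by vertex_cases_ra (phd q) (t a); vertex_cases_ar (ptl q) (h a); vertex_cases (ptl q) (t a);
  vertex_cases (phd q) (h a); vertex_cases (t a) (h a); simplify; rewrite ?scalerDl.
Qed.

Lemma leibniz_tail_cond_b_summand_neq u a q : t a != u ->
  cond_a_summand u q ** ar a + e_ u ** cond_b_summand a q =
  (if (ptl q == u) && (phd q == t a) then crd (dv u) q + crd (dv (t a)) q else 0)
    *: (r q ** ar a).
Proof.
move=> tau; have uta : u != t a by rewrite eq_sym.
expand; rewrite if_scaler ?(negbTE tau).
by vertex_cases_ra (phd q) (t a); vertex_cases (ptl q) u; vertex_cases (phd q) u;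
  vertex_cases (ptl q) (t a);
  vertex_cases (phd q) (h a); vertex_cases_ar (ptl q) (h a); rewrite ?(negbTE tau) ?(negbTE uta);
  simplify; rewrite ?scalerDl.
Qed.

Lemma leibniz_head_cond_b_summand a q :
  cond_b_summand a q ** e_ (h a) + ar a ** cond_a_summand (h a) q = cond_b_summand a q.
Proof.
expand.
by vertex_cases_ra (phd q) (t a); vertex_cases_ar (ptl q) (h a); vertex_cases (ptl q) (t a);
  vertex_cases (phd q) (h a); vertex_cases (t a) (h a); simplify; rewrite ?scalerDl.
Qed.

Lemma cond_b_summandE a q :
  cond_a_summand (t a) q ** ar a + (e_ (t a) ** (crd (da a) q *: r q)) ** e_ (h a)
  + ar a ** cond_a_summand (h a) q = cond_b_summand a q.
Proof.
expand.
by vertex_cases_ra (phd q) (t a); vertex_cases_ar (ptl q) (h a); vertex_cases (ptl q) (t a);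
  vertex_cases (phd q) (h a); vertex_cases (t a) (h a); simplify; rewrite ?scalerDl.
Qed.

End Summands.

Section Conditions.
Variables (dv : V -> A) (da : E -> A).
Local Notation cond_a := (forall v, Qsum Q (dv v) (cond_a_summand dv v)).
Local Notation cond_b := (forall a, Qsum Q (da a) (cond_b_summand dv da a)).
Local Notation cond_c := (forall q, Q q -> ptl q != phd q ->
  crd (dv (phd q)) q + crd (dv (ptl q)) q = 0).

Lemma kVE_leibniz_cond_a : kVE_leibniz dv da -> cond_a.
Proof.
move=> [DV _ _] v; set c := crd (dv v).
have Dv_idem : dv v = dv v ** e_ v + e_ v ** dv v by rewrite DV eqxx.
have Dv_bracket : Qsum Q (dv v) (fun q =>
    ((if phd q == v then c q else 0) + (if ptl q == v then c q else 0)) *: r q).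
  rewrite {1}Dv_idem; apply: Qsum_ext (QsumD (Qsum_linear (mulA_linearl (e_ v)) (Qsum_crd _))
                                             (Qsum_linear (mulA_linearr (e_ v)) (Qsum_crd _))).
  by move=> q _ /=; rewrite bracket_basis.
apply: Qsum_ext (Qsum_crd (dv v)) => q Qq.
move: (Qsum_coef_uniq (Qsum_crd _) Dv_bracket Qq); rewrite /cond_a_summand -/c.
case: (eqVneq (phd q) v) => hq; case: (eqVneq (ptl q) v) => tq;
  rewrite /= ?addr0 ?add0r => cq //.
- by move: cq; rewrite -{1}[c q]addr0 => /addrI <-; rewrite scale0r.
- by rewrite cq scale0r.
Qed.

Lemma kVE_leibniz_cond_c : kVE_leibniz dv da -> cond_c.
Proof.
move=> LD q Qq tq_hq; have [DV _ _] := LD.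
have DVq := DV (ptl q) (phd q); rewrite (negbTE tq_hq) in DVq.
have S : Qsum Q 0 (fun q' => (if (ptl q' == ptl q) && (phd q' == phd q) then
    crd (dv (ptl q)) q' + crd (dv (phd q)) q' else 0) *: r q').
  rewrite -DVq; apply: Qsum_ext (QsumD
    (Qsum_linear (mulA_linearl (e_ (phd q))) (kVE_leibniz_cond_a LD (ptl q)))
    (Qsum_linear (mulA_linearr (e_ (ptl q))) (kVE_leibniz_cond_a LD (phd q)))).
  by move=> q' _ /=; rewrite bracket_cond_a_summand_neq.
have S0 : Qsum Q 0 (fun q' => (0 : k) *: r q').
  by apply: Qsum_ext Qsum0 => q' _; rewrite scale0r.
by have := Qsum_coef_uniq S S0 Qq; rewrite !eqxx addrC.
Qed.

Lemma kVE_leibniz_cond_b : kVE_leibniz dv da -> cond_b.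
Proof.
move=> LD a; have [_ DA DAV] := LD.
have DAta := DA (t a) a; rewrite eqxx in DAta.
have Da_split : da a =
    dv (t a) ** ar a + (e_ (t a) ** da a) ** e_ (h a) + ar a ** dv (h a).
  rewrite -{1}DAta -addrA; congr (_ + _).
  by rewrite -{1}(DAV a) mulAD !mulA_assoc triv_mul_res ptl_apath eqxx.
rewrite {1}Da_split; apply: Qsum_ext (QsumD (QsumD
    (Qsum_linear (mulA_linearl (ar a)) (kVE_leibniz_cond_a LD (t a)))
    (Qsum_linear (linear_comp (mulA_linearr (e_ (t a))) (mulA_linearl (e_ (h a))))
                 (Qsum_crd (da a))))
  (Qsum_linear (mulA_linearr (ar a)) (kVE_leibniz_cond_a LD (h a)))).
by move=> q _ /=; rewrite cond_b_summandE.
Qed.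

Lemma conds_kVE_leibniz : cond_a -> cond_b -> cond_c -> kVE_leibniz dv da.
Proof.
move=> hA hB hC; split.
- move=> u v; case: (eqVneq u v) => [<-|uv].
    apply: (Qsum_inj _ (hA u)); apply: Qsum_ext (QsumD
      (Qsum_linear (mulA_linearl (e_ u)) (hA u)) (Qsum_linear (mulA_linearr (e_ u)) (hA u))).
    by move=> q _ /=; rewrite bracket_cond_a_summand.
  apply: (Qsum_inj _ Qsum0); apply: Qsum_ext (QsumD
    (Qsum_linear (mulA_linearl (e_ v)) (hA u)) (Qsum_linear (mulA_linearr (e_ u)) (hA v))).
  move=> q Qq /=; rewrite bracket_cond_a_summand_neq //.
  case: andP => [[/eqP tq /eqP hq]|_]; last by rewrite scale0r.
  by have := hC q Qq; rewrite tq hq addrC => /(_ uv) ->; rewrite scale0r.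
- move=> u a; case: (eqVneq (t a) u) => [<-|tau].
    apply: (Qsum_inj _ (hB a)); apply: Qsum_ext (QsumD
      (Qsum_linear (mulA_linearl (ar a)) (hA (t a)))
      (Qsum_linear (mulA_linearr (e_ (t a))) (hB a))).
    by move=> q _ /=; rewrite leibniz_tail_cond_b_summand.
  apply: (Qsum_inj _ Qsum0); apply: Qsum_ext (QsumD
    (Qsum_linear (mulA_linearl (ar a)) (hA u)) (Qsum_linear (mulA_linearr (e_ u)) (hB a))).
  move=> q Qq /=; rewrite leibniz_tail_cond_b_summand_neq //.
  case: andP => [[/eqP tq /eqP hq]|_]; last by rewrite scale0r.
  by have := hC q Qq; rewrite tq hq eq_sym addrC => /(_ tau) ->; rewrite scale0r.
- move=> a; apply: (Qsum_inj _ (hB a)); apply: Qsum_ext (QsumD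
    (Qsum_linear (mulA_linearl (e_ (h a))) (hB a)) (Qsum_linear (mulA_linearr (ar a)) (hA (h a)))).
  by move=> q _ /=; rewrite leibniz_head_cond_b_summand.
Qed.

End Conditions.

End Basis.

Section Extension.
Variables (dv : V -> A) (da : E -> A).
Hypothesis dv_da_leibniz : kVE_leibniz dv da.

Definition path_derivation (p : qpath) : A :=
  if arrows p is [::] then dv (ptl p) else leibniz_sum da (arrows p).

Lemma path_derivation_apath e : path_derivation (apath t h e) = da e.
Proof. by rewrite /path_derivation /= leibniz_sum_cons /leibniz_sum big_ord0 mulA0 addr0. Qed.

Lemma path_derivation_cons e p : ptl p = h e ->
  path_derivation (catp (apath t h e) p) = da e ** r p + ar e ** path_derivation p.
Proof.
move=> tp; have hep : phd (apath t h e) = ptl p by rewrite phd_apath tp.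
rewrite /path_derivation (arrows_catp hep) /= leibniz_sum_cons.
case: (eqVneq (arrows p) [::]) => ap; last first.
  by rewrite (rmulr_arrows _ ap); case: (arrows p) ap.
rewrite ap /leibniz_sum big_ord0 mulA0 addr0 /= (qpath_nil ap) tp.
by case: dv_da_leibniz => _ _ ->.
Qed.

Local Notation Dp := path_derivation.

Lemma path_derivation_triv_mul u q :
  (if u == ptl q then Dp (catp (triv t h u) q) else 0) = dv u ** r q + e_ u ** Dp q.
Proof.
have [DV DA _] := dv_da_leibniz.
elim/qpath_ind: q => [v|f q tq _].
  rewrite ptl_triv DV; case: (eqVneq u v) => [<-|//].
  by rewrite triv_catp.
have hfq : phd (apath t h f) = ptl q by rewrite phd_apath tq.
rewrite (ptl_catp hfq) ptl_apath (path_derivation_cons tq) (res_catp hfq).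
rewrite mulAD !mulA_assoc addrA -mulDA DA triv_mul_res ptl_apath eq_sym.
case: (eqVneq (t f) u) => [<-|_]; last by rewrite !mul0A addr0.
by rewrite triv_catp ?(ptl_catp hfq) // (path_derivation_cons tq).
Qed.

Lemma path_derivation_mul p q :
  (if phd p == ptl q then Dp (catp p q) else 0) = Dp p ** r q + r p ** Dp q.
Proof.
elim/qpath_ind: p q => [u|e p tp IHp] q; first exact: path_derivation_triv_mul.
have hep : phd (apath t h e) = ptl p by rewrite phd_apath tp.
rewrite (phd_catp hep) (path_derivation_cons tp) (res_catp hep).
have := IHp q; case: (eqVneq (phd p) (ptl q)) => hpq IHpq.
  have tpq : ptl (catp p q) = h e by rewrite (ptl_catp hpq).
  rewrite (catpA hep hpq) (path_derivation_cons tpq) IHpq (res_catp hpq).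
  by rewrite !mulAD !mulDA !mulA_assoc addrA.
rewrite mulDA -!mulA_assoc -addrA -mulAD -IHpq mulA0 addr0.
by rewrite res_mul (negbTE hpq) mulA0.
Qed.

Lemma diff_op_linext_path_derivation : diff_op pi mulA (linext Dp).
Proof.
split; first exact: linext_linear.
apply: bilinear_malg_eq => [y|x|y|x|p q].
- exact: linear_comp (pmul_linearl y) (linext_linear Dp).
- exact: linear_comp (pmul_linearr x) (linext_linear Dp).
- exact: linear_add (linear_comp (linext_linear Dp) (mulA_linearl _))
                    (linear_comp pi_linear (mulA_linearl _)).
- exact: linear_add (linear_comp pi_linear (mulA_linearr _))
                    (linear_comp (linext_linear Dp) (mulA_linearr _)).
rewrite (congr2 +%R (congr2 mulA (linextU Dp p) (pi_res q))
                   (congr2 mulA (pi_res p) (linextU Dp q))).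
rewrite pmulUU pcatE -path_derivation_mul.
by case: ifP => _; [exact: linextU | exact: lin0 (linext_linear Dp)].
Qed.

End Extension.

End Derivations.

Section Proposition.
Variables (V E : finType) (t h : E -> V) (k : fieldType).
Local Notation qpath := (qpath t h).
Local Notation kG := (kG t h k).
Variables (I : kG -> Prop) (A : lmodType k) (pi : kG -> A) (mulA : A -> A -> A).
Hypothesis pi_quot : is_quotient I pi mulA.
Variables (Q : qpath -> Prop) (crd : A -> qpath -> k).
Hypothesis Q_basis : is_path_basis pi Q crd.

Let pi_res (p : qpath) : pi << p >> = res pi p := erefl.

Lemma diff_op_conditions D : diff_op pi mulA D ->
  [/\ cond_a pi Q crd D, cond_b pi mulA Q crd D & cond_c Q crd D].
Proof.
move=> /(diff_op_kVE_leibniz pi_res) LD; have [Q_free Qsum_crd] := Q_basis.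
split=> [v|a|q].
- exact (kVE_leibniz_cond_a pi_quot pi_res Q_free Qsum_crd LD v).
- exact (kVE_leibniz_cond_b pi_quot pi_res Q_free Qsum_crd LD a).
- exact (kVE_leibniz_cond_c pi_quot pi_res Q_free Qsum_crd LD (q := q)).
Qed.

Lemma conditions_diff_op_extension D0 : linear_on_kVE D0 ->
  cond_a pi Q crd D0 -> cond_b pi mulA Q crd D0 -> cond_c Q crd D0 ->
  exists D : kG -> A,
    [/\ diff_op pi mulA D,
        (forall x, in_kVE x -> D x = D0 x),
        (forall p : qpath, (2 <= size (arrows p))%N -> D << p >> = leibniz_formula pi mulA D p) &
        (forall D' : kG -> A, diff_op pi mulA D' ->
           (forall x, in_kVE x -> D' x = D0 x) -> forall x, D' x = D x)].
Proof.
move=> D0lin hA hB hC.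
pose dv v := D0 (vtx t h k v); pose da e := D0 (arr t h k e).
have LD : kVE_leibniz mulA (res pi) dv da := conds_kVE_leibniz pi_quot pi_res hA hB hC.
pose Dp := path_derivation mulA (res pi) dv da.
have Ddiff : diff_op pi mulA (linext Dp) := diff_op_linext_path_derivation pi_quot pi_res LD.
have DpE p : (size (arrows p) <= 1)%N -> Dp p = D0 << p >>.
  case ap: (arrows p) => [|e [|//]] _; first by rewrite (qpath_nil ap).
  by rewrite (qpath_arrow ap) /Dp (path_derivation_apath _ pi_quot).
have D_kVE : forall x, in_kVE x -> linext Dp x = D0 x := linext_eq_on_kVE D0lin DpE.
exists (linext Dp); split => // [p size_p | D' D'diff D'_kVE x].
  have Da e : linext Dp (arr t h k e) = da e.
    by rewrite linextU /Dp (path_derivation_apath _ pi_quot).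
  rewrite linextU; transitivity (leibniz_sum mulA (res pi) da (arrows p)).
    by rewrite /Dp /path_derivation; case: (arrows p) size_p.
  by rewrite -(eq_leibniz_sum _ _ _ Da).
by apply: (diff_op_eq D'diff Ddiff) => [v|e]; rewrite D'_kVE ?D_kVE //; apply: in_kVEU.
Qed.

End Proposition.

Unset Implicit Arguments.

Theorem proposition2p5 (k : fieldType) (V E : finType) (t h : E -> V)
    (Hconn : quiver_connected t h)
    (I : kG t h k -> Prop) (HI : two_sided_ideal I)
    (HIR2 : forall x, I x -> in_R2 x)
    (A : lmodType k) (pi : kG t h k -> A) (mulA : A -> A -> A)
    (Hquot : is_quotient I pi mulA)
    (Q : qpath t h -> Prop) (crd : A -> qpath t h -> k)
    (HQ : is_path_basis pi Q crd)
    (HQV : forall v, Q (triv t h v)) (HQE : forall e, Q (apath t h e)) :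
  (forall D : kG t h k -> A, diff_op pi mulA D ->
     [/\ cond_a pi Q crd D, cond_b pi mulA Q crd D & cond_c Q crd D])
  /\
  (forall D0 : kG t h k -> A, linear_on_kVE D0 ->
     cond_a pi Q crd D0 -> cond_b pi mulA Q crd D0 -> cond_c Q crd D0 ->
     exists D : kG t h k -> A,
       [/\ diff_op pi mulA D,
           (forall x, in_kVE x -> D x = D0 x),
           (forall p : qpath t h, (2 <= size (arrows p))%N ->
              D << p >> = leibniz_formula pi mulA D p) &
           (forall D' : kG t h k -> A, diff_op pi mulA D' ->
              (forall x, in_kVE x -> D' x = D0 x) -> forall x, D' x = D x)]).
Proof.
split; first exact (diff_op_conditions Hquot HQ).
exact (conditions_diff_op_extension (Q := Q) (crd := crd) Hquot).
Qed.
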